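(* Let $X\subseteq\mathbb{C}(\mathbb{Z})$ admit a reproducing filter $\phi\in\mathbb{C}_m(\mathbb{Z})$ with $\|\phi\|_2\le\mathsf{R}/\sqrt{2m+1}$. Then for every integer $k\ge2$, the $k$-fold convolution power $\phi^k=\phi*\cdots*\phi\in\mathbb{C}_{km}(\mathbb{Z})$ is also reproducing for $X$, and $$\|\phi^k\|_2\le\|\mathcal{F}_{km}[\phi^k]\|_1\le\frac{c_k\mathsf{R}^k}{\sqrt{2km+1}},$$ where the constants $c_k$ depend only on $k$ and satisfy $c_k=2^{k-1}$ for $k=2^p$, $c_{2k+1}\le3\sqrt{2k+1}\,c_k^2$ for $k\in\mathbb{N}$ (with $c_1=1$), and $\log(c_k)=O(k\log k)$.
   Context: $\mathbb{C}(\mathbb{Z})$: two-sided complex sequences; $\mathbb{C}_p(\mathbb{Z})$: those with $x_t=0$ for $|t|>p$. Convolution $(u*v)_t=\sum_\tau u_\tau v_{t-\tau}$; $\phi$ reproduces $X$ if $\phi*x=x$ for all $x\in X$. $\|\cdot\|_2$ on sequences is the $\ell_2$-norm. DFT $(\mathcal{F}_p[u])_k=(2p+1)^{-1/2}\sum_{|\tau|\le p}\exp(-i2\pi k\tau/(2p+1))u_\tau$, $k=0,\dots,2p$. *)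

From HB Require Import structures.
From mathcomp Require Import all_boot all_order all_algebra.
From mathcomp Require Import complex.
From mathcomp Require Import all_classical all_reals.
From mathcomp Require Import trigo.
Set Implicit Arguments. Unset Strict Implicit. Unset Printing Implicit Defensive.
Import Order.TTheory GRing.Theory Num.Theory.
Local Open Scope ring_scope.

Section Defs.
Variable R : realType.

Definition cseq := int -> R[i].

Definition cmod (z : R[i]) : R := Num.sqrt (complex.Re z ^+ 2 + complex.Im z ^+ 2).

Definition in_Cp (p : nat) (x : cseq) : Prop :=
  forall t : int, (p%:Z < `|t|)%R -> x t = 0.

(* sum over the window |tau| <= p, tau = i - p for i < 2p+1 *)
Definition wsum (p : nat) (f : int -> R[i]) : R[i] :=
  \sum_(i < (2 * p).+1) f (i%:Z - p%:Z).
Definition wsumR (p : nat) (f : int -> R) : R :=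
  \sum_(i < (2 * p).+1) f (i%:Z - p%:Z).

(* convolution (u * v)_t = sum_tau u_tau v_(t - tau), for u in C_p(Z)
   (the sum is then exactly the sum over |tau| <= p) *)
Definition conv (p : nat) (u v : cseq) : cseq :=
  fun t => wsum p (fun tau => u tau * v (t - tau)).

Definition reproduces (p : nat) (phi : cseq) (X : cseq -> Prop) : Prop :=
  forall x, X x -> conv p phi x = x.

Fixpoint cpow (m : nat) (phi : cseq) (k : nat) : cseq :=
  match k with
  | 0 => phi
  | 1 => phi
  | k'.+1 => conv m phi (cpow m phi k')
  end.

Definition l2norm (p : nat) (x : cseq) : R :=
  Num.sqrt (wsumR p (fun t => cmod (x t) ^+ 2)).

Definition expmi (theta : R) : R[i] := Complex (cos theta) (- sin theta).

Definition dft (p : nat) (u : cseq) (k : nat) : R[i] :=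
  (((Num.sqrt ((2 * p).+1%:R : R))^-1)%:C)%C *
  wsum p (fun tau => expmi (2 * pi * k%:R * tau%:~R / ((2 * p).+1)%:R) * u tau).

Definition dft_l1 (p : nat) (u : cseq) : R :=
  \sum_(k < (2 * p).+1) cmod (dft p u k).

End Defs.

(* Let S_j(u) = sum_tau exp(-2 pi i j tau / N) u_tau be the Fourier sums at
   the N-th roots of unity, N = 2km + 1.  They turn convolution into
   multiplication, so S_j(phi^k) = S_j(phi)^k.  Cauchy-Schwarz gives
   |S_j(phi)| <= sqrt(2m+1) ||phi||_2 <= R, and Parseval gives
   sum_j |S_j(phi)|^2 = N ||phi||_2^2 <= N R^2 / (2m+1) <= k R^2.  Hence
   sum_j |S_j(phi^k)| <= R^(k-2) sum_j |S_j(phi)|^2 <= k R^k, that is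
   ||F_km[phi^k]||_1 <= k R^k / sqrt(2km+1), and c_k = 2^(k-1) >= k meets all
   the requirements on c_k.  The first inequality is Parseval for F_km
   together with ||.||_2 <= ||.||_1, and phi^k reproduces X because
   convolution is associative. *)

From HB Require Import structures.
From mathcomp Require Import all_boot all_order all_algebra.
From mathcomp Require Import complex.
From mathcomp Require Import all_classical all_reals.
From mathcomp Require Import exp trigo.
From mathcomp Require Import zify ring lra.
Set Implicit Arguments.
Unset Strict Implicit.
Unset Printing Implicit Defensive.
Import Order.TTheory GRing.Theory Num.Theory.
Local Open Scope ring_scope.

Lemma big_ord_window (V : nmodType) (g : nat -> V) (n a l : nat) :
  (a + l <= n)%N ->
  (forall i, (i < a)%N -> g i = 0) -> (forall i, (a + l <= i)%N -> g i = 0) ->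
  \sum_(i < n) g i = \sum_(i < l) g (a + i)%N.
Proof.
move=> aln g_lt g_ge; have an : (a <= n)%N by apply: leq_trans (leq_addr l a) aln.
rewrite -(big_mkord xpredT) (big_cat_nat (n := a)) //=.
rewrite [X in _ + X](big_cat_nat (n := a + l)) ?leq_addr //=.
rewrite big_nat_cond big1 ?add0r => [|i /andP[/andP[_ ?] _]]; last exact: g_lt.
rewrite [X in _ + X]big_nat_cond [X in _ + X]big1 ?addr0 => [|i /andP[/andP[? _] _]];
  last exact: g_ge.
by rewrite -{1}(add0n a) big_addn addKn big_mkord; apply: eq_bigr => i _; rewrite addnC.
Qed.

Section Convolution.
Variable R : realType.
Implicit Types (phi v x : cseq R) (f : int -> R[i]).

Lemma wsum_shift f (p d : nat) (tau : int) :
  in_Cp p f -> `|tau| <= d%:Z ->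
  wsum (p + d) (fun t => f (t - tau)) = wsum p f.
Proof.
move=> fCp tau_le; rewrite /wsum.
have [a aE] : exists a : nat, a%:Z = d%:Z + tau by exists (absz (d%:Z + tau)); lia.
rewrite (@big_ord_window _ (fun i : nat => f (i%:Z - (p + d)%N%:Z - tau)) _ a (2 * p).+1).
- by apply: eq_bigr => i _; congr f; rewrite PoszD aE; lia.
- lia.
- by move=> i ?; apply: fCp; lia.
- by move=> i ?; apply: fCp; lia.
Qed.

Lemma conv_in_Cp (m q : nat) phi v : in_Cp q v -> in_Cp (m + q) (conv m phi v).
Proof.
move=> vCp t t_gt; rewrite /conv /wsum big1 // => i _.
by rewrite vCp ?mulr0 //; have := ltn_ord i; lia.
Qed.

Lemma conv_assoc (m q : nat) phi v x :
  in_Cp q v -> conv (m + q) (conv m phi v) x = conv m phi (conv q v x).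
Proof.
move=> vCp; apply: boolp.funext => t.
rewrite /conv {1}/wsum; under eq_bigr do rewrite /wsum mulr_suml.
rewrite exchange_big /=; apply: eq_bigr => j _.
under eq_bigr do rewrite -mulrA.
rewrite -mulr_sumr; congr (_ * _).
pose tau : int := j%:Z - m%:Z.
have tau_le : `|tau| <= m%:Z by have := ltn_ord j; rewrite /tau; lia.
have vxCp : in_Cp q (fun s => v s * x (t - tau - s)) by move=> s ?; rewrite vCp ?mul0r.
rewrite -(wsum_shift vxCp tau_le) addnC /wsum.
by apply: eq_bigr => i _; congr (_ * x _); rewrite /tau; ring.
Qed.

Lemma cpowS (m k : nat) phi : (0 < k)%N -> cpow m phi k.+1 = conv m phi (cpow m phi k).
Proof. by case: k. Qed.

Lemma cpow_in_Cp (m k : nat) phi : in_Cp m phi -> (0 < k)%N ->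
  in_Cp (k * m) (cpow m phi k).
Proof.
move=> phiCp; elim: k => [//|[|k] IH] _; first by rewrite mul1n.
by rewrite cpowS // mulSn; apply/conv_in_Cp/IH.
Qed.

Lemma cpow_reproduces (m k : nat) phi (X : cseq R -> Prop) :
  in_Cp m phi -> reproduces m phi X -> (0 < k)%N ->
  reproduces (k * m) (cpow m phi k) X.
Proof.
move=> phiCp phiX; elim: k => [//|[|k] IH] _; first by rewrite mul1n.
move=> x Xx; rewrite cpowS // mulSn conv_assoc; last exact: cpow_in_Cp.
by rewrite IH // phiX.
Qed.

End Convolution.

Section Exponential.
Variable R : realType.
Implicit Types a b : R.

Lemma expmiD a b : expmi (a + b) = expmi a * expmi b.
Proof. by rewrite /expmi cosD sinD; simpc; congr (Complex _ _); ring. Qed.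

Lemma expmi0 : expmi (0 : R) = 1.
Proof. by rewrite /expmi cos0 sin0 oppr0. Qed.

Lemma conj_expmi a : (expmi a)^*%C = expmi (- a).
Proof. by rewrite /expmi /= cosN sinN !opprK. Qed.

Lemma expmiMn a n : expmi (a *+ n) = expmi a ^+ n.
Proof.
elim: n => [|n IH]; first by rewrite mulr0n expmi0.
by rewrite mulrS expmiD IH exprS.
Qed.

Lemma expmi_2pi_mulz (n : int) : expmi (2 * pi * n%:~R : R) = 1.
Proof.
have expmi_2pi_mulrn (k : nat) : expmi (2 * pi * k%:R : R) = 1.
  rewrite mulr_natr expmiMn mulr_natl expmiMn /expmi cospi sinpi oppr0.
  have -> : (-1 +i* 0)%C = - 1 :> R[i] by apply/eqP; rewrite eq_complex /= oppr0 !eqxx.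
  by rewrite sqrrN !expr1n.
case: n => n; first exact: expmi_2pi_mulrn.
by rewrite NegzE intrN mulrN -conj_expmi expmi_2pi_mulrn conjc1.
Qed.

Lemma sin_neq0 (y : R) : 0 < `|y| < pi -> sin y != 0.
Proof.
case: (ltrgt0P y) => [_|_|->]; last by rewrite ltxx.
  by move=> /sin_gt0_pi /gt_eqF ->.
by rewrite -oppr_eq0 -sinN => /sin_gt0_pi /gt_eqF ->.
Qed.

Lemma expmi_neq1 (N : nat) (n : int) : n != 0 -> `|n| < N%:Z ->
  expmi (2 * pi * n%:~R / N%:R : R) != 1.
Proof.
move=> n_neq0 n_lt; apply/eqP => /(congr1 (@complex.Re R)) /=.
set y := pi * n%:~R / N%:R : R.
have -> : 2 * pi * n%:~R / N%:R = y *+ 2 by rewrite /y mulr_natl; ring.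
rewrite cos_mulr2n => cos2y.
have : sin y ^+ 2 = 0 by rewrite sin2cos2; move: cos2y; rewrite -mulr_natr; lra.
move/eqP; rewrite expf_eq0 /=; apply/negP/sin_neq0.
have N_gt0 : (0 : R) < N%:R by rewrite ltr0n; lia.
have n_ge1 : (1 : R) <= `|n%:~R| by rewrite -intr_norm ler1z; lia.
have n_ltN : `|n%:~R| < (N%:R : R) by rewrite -intr_norm -[N%:R]/((N%:Z)%:~R) ltr_int.
rewrite /y normrM normfV normrM (ger0_norm (pi_ge0 R)) (gtr0_norm N_gt0) -mulrA.
rewrite mulr_gt0 ?pi_gt0 ?divr_gt0 //=; last by lra.
by rewrite gtr_pMr ?pi_gt0 // ltr_pdivrMr // mul1r.
Qed.

Lemma sum_expmi_roots (N : nat) (n : int) : (0 < N)%N -> `|n| < N%:Z ->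
  \sum_(j < N) expmi (2 * pi * j%:R * n%:~R / N%:R : R) = (n == 0)%:R * N%:R.
Proof.
move=> N_gt0 n_lt; have [->|n_neq0] := eqVneq n 0.
  under eq_bigr do rewrite mulr0 mul0r expmi0.
  by rewrite sumr_const card_ord mul1r.
set w := expmi (2 * pi * n%:~R / N%:R : R).
have wX (j : nat) : expmi (2 * pi * j%:R * n%:~R / N%:R : R) = w ^+ j.
  by rewrite /w -expmiMn -mulr_natl; congr expmi; ring.
under eq_bigr do rewrite wX.
have : (w - 1) * \sum_(j < N) w ^+ j = 0.
  rewrite -subrX1 /w -expmiMn -[X in expmi X]mulr_natr divfK ?pnatr_eq0 -?lt0n //.
  by rewrite expmi_2pi_mulz subrr.
by move/eqP; rewrite mulf_eq0 subr_eq0 (negbTE (expmi_neq1 n_neq0 n_lt)) mul0r => /eqP.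
Qed.

End Exponential.

Section SumInequalities.
Variable F : rcfType.
Implicit Types (n : nat) (b : F).

Lemma sqr_sum_le n (a : 'I_n -> F) :
  (\sum_(j < n) a j) ^+ 2 <= n%:R * \sum_(j < n) a j ^+ 2.
Proof.
have sum_sqrD : \sum_(i < n) \sum_(j < n) (a i ^+ 2 + a j ^+ 2) =
    2 * (n%:R * \sum_(j < n) a j ^+ 2).
  under eq_bigr do rewrite big_split /= sumr_const card_ord.
  rewrite big_split /= sumr_const card_ord -sumrMnl.
  under eq_bigr do rewrite -mulr_natr.
  under [X in _ + X]eq_bigr do rewrite -mulr_natr.
  by rewrite -!mulr_suml; ring.
suff : 2 * (\sum_(j < n) a j) ^+ 2 <= \sum_(i < n) \sum_(j < n) (a i ^+ 2 + a j ^+ 2).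
  by rewrite sum_sqrD; lra.
rewrite expr2 mulr_suml mulr_sumr; apply: ler_sum => i _.
rewrite !mulr_sumr; apply: ler_sum => j _.
by have := sqr_ge0 (a i - a j); rewrite sqrrB; lra.
Qed.

Lemma sum_le_sqrt_sum_sqr n (a : 'I_n -> F) :
  \sum_(j < n) a j <= Num.sqrt n%:R * Num.sqrt (\sum_(j < n) a j ^+ 2).
Proof.
rewrite -sqrtrM ?ler0n // (le_trans (ler_norm _)) // -sqrtr_sqr ler_sqrt ?sqr_sum_le //.
by rewrite mulr_ge0 ?ler0n ?sumr_ge0 // => i _; apply: sqr_ge0.
Qed.

Lemma sqrt_sum_sqr_le_sum n (a : 'I_n -> F) : (forall j, 0 <= a j) ->
  Num.sqrt (\sum_(j < n) a j ^+ 2) <= \sum_(j < n) a j.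
Proof.
move=> a_ge0; have sum_ge0 : 0 <= \sum_(j < n) a j by apply: sumr_ge0.
rewrite -(ger0_norm sum_ge0) -sqrtr_sqr ler_sqrt ?sqr_ge0 // [X in _ <= X]expr2 mulr_suml.
apply: ler_sum => i _; rewrite expr2 ler_wpM2l //.
by rewrite (bigD1 i) //= lerDl sumr_ge0.
Qed.

Lemma sum_exprS2_le n (a : 'I_n -> F) b k : (forall j, 0 <= a j <= b) ->
  \sum_(j < n) a j ^+ k.+2 <= b ^+ k * \sum_(j < n) a j ^+ 2.
Proof.
move=> a_bnd; rewrite mulr_sumr; apply: ler_sum => j _.
have /andP[a_ge0 a_le] := a_bnd j.
by rewrite -addn2 exprD ler_wpM2r ?sqr_ge0 // lerXn2r // nnegrE (le_trans a_ge0).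
Qed.

End SumInequalities.

Section ComplexModulus.
Variable R : realType.
Implicit Types z w : R[i].
Local Open Scope complex_scope.

Lemma cmodE z : (cmod z)%:C = `|z|.
Proof. by rewrite normc_def. Qed.

Lemma cmod_ge0 z : 0 <= cmod z.
Proof. exact: sqrtr_ge0. Qed.

Lemma cmodM z w : cmod (z * w) = cmod z * cmod w.
Proof. by apply: complexI; rewrite rmorphM /= !cmodE normrM. Qed.

Lemma cmodX z n : cmod (z ^+ n) = cmod z ^+ n.
Proof. by apply: complexI; rewrite rmorphXn /= !cmodE normrX. Qed.

Lemma cmod_real (x : R) : cmod x%:C = `|x|.
Proof. by rewrite /cmod /= expr0n /= addr0 sqrtr_sqr. Qed.

Lemma sqr_cmod z : (cmod z ^+ 2)%:C = z * z^*%C.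
Proof. by rewrite rmorphXn /= cmodE sqr_normc. Qed.

Lemma cmod_sum n (f : 'I_n -> R[i]) :
  cmod (\sum_(i < n) f i) <= \sum_(i < n) cmod (f i).
Proof.
rewrite -lecR cmodE rmorph_sum /=; under [X in _ <= X]eq_bigr do rewrite cmodE.
exact: ler_norm_sum.
Qed.

Lemma cmod_expmi (a : R) : cmod (expmi a) = 1.
Proof. by rewrite /cmod /= sqrrN cos2Dsin2 sqrtr1. Qed.

End ComplexModulus.

Section FourierSum.
Variable R : realType.
Implicit Types (phi u v : cseq R).
Local Open Scope complex_scope.

Definition fourier_sum (p N : nat) u (j : nat) : R[i] :=
  wsum p (fun tau => expmi (2 * pi * j%:R * tau%:~R / N%:R) * u tau).

Lemma dftE (p : nat) u (j : nat) :
  dft p u j = (Num.sqrt ((2 * p).+1%:R : R))^-1%:C * fourier_sum p (2 * p).+1 u j.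
Proof. by []. Qed.

Lemma fourier_sum_conv (m q N : nat) phi v (j : nat) : in_Cp q v ->
  fourier_sum (m + q) N (conv m phi v) j = fourier_sum m N phi j * fourier_sum q N v j.
Proof.
move=> vCp; rewrite /fourier_sum /conv.
set th := 2 * pi * j%:R / N%:R : R.
have thE (t : int) : expmi (2 * pi * j%:R * t%:~R / N%:R) = expmi (th * t%:~R).
  by congr expmi; rewrite /th; ring.
rewrite {1}/wsum; under eq_bigr do rewrite thE /wsum mulr_sumr.
rewrite exchange_big /= [X in _ = X * _]/wsum mulr_suml; apply: eq_bigr => i _.
set tau : int := i%:Z - m%:Z.
have tau_le : `|tau| <= m%:Z by have := ltn_ord i; rewrite /tau; lia.
have vCp' : in_Cp q (fun s => expmi (2 * pi * j%:R * s%:~R / N%:R) * v s).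
  by move=> s ?; rewrite vCp ?mulr0.
rewrite -(wsum_shift vCp' tau_le) addnC /wsum mulr_sumr; apply: eq_bigr => l _.
have shiftE (s : int) :
    expmi (th * s%:~R) = expmi (th * tau%:~R) * expmi (th * (s - tau)%:~R).
  by rewrite -expmiD intrB; congr expmi; ring.
by rewrite !thE shiftE; ring.
Qed.

Lemma fourier_sum_cpow (m N k : nat) phi (j : nat) : in_Cp m phi -> (0 < k)%N ->
  fourier_sum (k * m) N (cpow m phi k) j = fourier_sum m N phi j ^+ k.
Proof.
move=> phiCp; elim: k => [//|[|k] IH] _; first by rewrite mul1n expr1.
by rewrite cpowS // mulSn fourier_sum_conv ?IH ?exprS //; apply: cpow_in_Cp.
Qed.

Lemma fourier_sum_parseval (p N : nat) u : ((2 * p).+1 <= N)%N ->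
  \sum_(j < N) fourier_sum p N u j * (fourier_sum p N u j)^*%C =
  N%:R * wsum p (fun t => u t * (u t)^*%C).
Proof.
move=> N_ge; rewrite /fourier_sum /wsum.
under eq_bigr do rewrite rmorph_sum mulr_suml.
under eq_bigr do under eq_bigr do rewrite mulr_sumr.
rewrite exchange_big /=; under eq_bigr do rewrite exchange_big /=.
rewrite mulr_sumr; apply: eq_bigr => i1 _.
have pairE (a b : R) (x y : R[i]) :
    expmi a * x * (expmi b * y)^*%C = x * y^*%C * expmi (a - b).
  by rewrite (conjc_is_multiplicative R).1 conj_expmi expmiD; ring.
under eq_bigr do under eq_bigr do rewrite pairE.
under eq_bigr do rewrite -mulr_sumr.
have phaseE (i2 : 'I_(2 * p).+1) (j : 'I_N) :
    2 * pi * j%:R * (i1%:Z - p%:Z)%:~R / N%:R - 2 * pi * j%:R * (i2%:Z - p%:Z)%:~R / N%:R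
    = 2 * pi * j%:R * (i1%:Z - i2%:Z)%:~R / N%:R :> R.
  by rewrite !intrB; ring.
under eq_bigr do under eq_bigr do rewrite phaseE.
have N_gt0 : (0 < N)%N by lia.
have diff_lt (i2 : 'I_(2 * p).+1) : `|i1%:Z - i2%:Z| < N%:Z.
  by have := ltn_ord i1; have := ltn_ord i2; lia.
under eq_bigr => i2 _ do rewrite (sum_expmi_roots R N_gt0 (diff_lt i2)).
rewrite (bigD1 i1) //= subrr eqxx mul1r big1 ?addr0; first by ring.
move=> i2 i2_neq; suff -> : (i1%:Z - i2%:Z == 0) = false by rewrite mul0r mulr0.
by rewrite subr_eq0 eqz_nat eq_sym; apply: negbTE.
Qed.

Lemma l2norm_ge0 (p : nat) u : 0 <= l2norm p u.
Proof. exact: sqrtr_ge0. Qed.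

Lemma sqr_l2norm (p : nat) u : l2norm p u ^+ 2 = wsumR p (fun t => cmod (u t) ^+ 2).
Proof. by rewrite sqr_sqrtr // sumr_ge0 // => i _; apply: sqr_ge0. Qed.

Lemma sum_sqr_cmod_fourier_sum (p N : nat) u : ((2 * p).+1 <= N)%N ->
  \sum_(j < N) cmod (fourier_sum p N u j) ^+ 2 = N%:R * l2norm p u ^+ 2.
Proof.
move=> N_ge; apply: complexI; rewrite sqr_l2norm rmorph_sum rmorphM /= rmorph_sum /=.
under eq_bigr do rewrite sqr_cmod.
rewrite fourier_sum_parseval // rmorph_nat; congr (_ * _).
by apply: eq_bigr => i _; rewrite sqr_cmod.
Qed.

Lemma cmod_fourier_sum_le (p N : nat) u (j : nat) :
  cmod (fourier_sum p N u j) <= Num.sqrt (2 * p).+1%:R * l2norm p u.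
Proof.
apply: le_trans (cmod_sum _) _; under eq_bigr do rewrite cmodM cmod_expmi mul1r.
exact: sum_le_sqrt_sum_sqr.
Qed.

Lemma cmod_dft (p : nat) u (j : nat) :
  cmod (dft p u j) = (Num.sqrt (2 * p).+1%:R)^-1 * cmod (fourier_sum p (2 * p).+1 u j).
Proof. by rewrite dftE cmodM cmod_real ger0_norm // invr_ge0 sqrtr_ge0. Qed.

Lemma l2norm_le_dft_l1 (p : nat) u : l2norm p u <= dft_l1 p u.
Proof.
suff <- : Num.sqrt (\sum_(j < (2 * p).+1) cmod (dft p u j) ^+ 2) = l2norm p u.
  by apply: sqrt_sum_sqr_le_sum => j; apply: cmod_ge0.
under eq_bigr do rewrite cmod_dft exprMn.
rewrite -mulr_sumr sum_sqr_cmod_fourier_sum // mulrA exprVn sqr_sqrtr ?ler0n //.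
by rewrite mulVf ?pnatr_eq0 // mul1r sqrtr_sqr ger0_norm ?l2norm_ge0.
Qed.

Lemma l2norm_le_ge0 (p : nat) u (r : R) :
  l2norm p u <= r / Num.sqrt (2 * p).+1%:R -> 0 <= r.
Proof.
move/(le_trans (l2norm_ge0 p u)).
by rewrite pmulr_lge0 // invr_gt0 sqrtr_gt0 ltr0n.
Qed.

Lemma dft_l1_cpow_le (m k : nat) phi (r : R) :
  in_Cp m phi -> l2norm m phi <= r / Num.sqrt (2 * m).+1%:R -> (2 <= k)%N ->
  dft_l1 (k * m) (cpow m phi k) <= k%:R * r ^+ k / Num.sqrt (2 * (k * m)).+1%:R.
Proof.
move=> phiCp phi_le; have r_ge0 := l2norm_le_ge0 phi_le.
case: k => [|[|k]] // _; set N := (2 * _).+1.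
have {}phi_le : Num.sqrt (2 * m).+1%:R * l2norm m phi <= r.
  by rewrite mulrC -ler_pdivlMr ?sqrtr_gt0 ?ltr0n.
have S_bnd (j : 'I_N) : 0 <= cmod (fourier_sum m N phi j) <= r.
  by rewrite cmod_ge0 (le_trans (cmod_fourier_sum_le _ _ _ _)).
have N_le : (N <= k.+2 * (2 * m).+1)%N by rewrite /N; nia.
rewrite /dft_l1; under eq_bigr do rewrite cmod_dft fourier_sum_cpow // cmodX.
rewrite -mulr_sumr mulrC ler_wpM2r ?invr_ge0 ?sqrtr_ge0 //.
rewrite (le_trans (sum_exprS2_le _ S_bnd)) // sum_sqr_cmod_fourier_sum; last by rewrite /N; nia.
have -> : r ^+ k.+2 = r ^+ k * r ^+ 2 by rewrite -exprD addn2.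
rewrite [X in _ <= X]mulrCA ler_wpM2l ?exprn_ge0 //.
apply: (@le_trans _ _ (k.+2%:R * ((2 * m).+1%:R * l2norm m phi ^+ 2))).
  by rewrite mulrA ler_wpM2r ?sqr_ge0 // -natrM ler_nat.
rewrite ler_wpM2l // -[X in X * _](sqr_sqrtr (ler0n _ _)) -exprMn.
by rewrite lerXn2r // nnegrE mulr_ge0 ?sqrtr_ge0 ?l2norm_ge0.
Qed.

End FourierSum.

Lemma exp2_odd_le (R : realType) (k : nat) :
  2 ^+ (2 * k) <= 3 * Num.sqrt (2 * k).+1%:R * (2 ^+ k.-1) ^+ 2 :> R.
Proof.
case: k => [|k]; first by rewrite expr0 expr1n sqrtr1 !mulr1 ler1n.
have -> : (2 : R) ^+ (2 * k.+1) = 2 ^+ 2 * (2 ^+ k) ^+ 2.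
  by rewrite -exprM -exprD; congr (_ ^+ _); lia.
rewrite [k.+1.-1]/= ler_wpM2r ?exprn_ge0 //.
have y_ge3 : (3 : R) <= (2 * k.+1).+1%:R by rewrite (ler_nat R 3); lia.
have := sqrtr_ge0 ((2 * k.+1).+1%:R : R); have := sqr_sqrtr (ler0n R (2 * k.+1).+1).
set t := Num.sqrt _; set y := _%:R in y_ge3 *; rewrite !expr2; nra.
Qed.

Lemma ln_exp2_le (R : realType) (k : nat) : (2 <= k)%N ->
  `|ln (2 ^+ k.-1 : R)| <= k%:R * ln k%:R.
Proof.
move=> k_ge2; have k_ge2R : (2 : R) <= k%:R by rewrite (ler_nat R 2 k).
have ln2_ge0 : 0 <= ln (2 : R) by apply: ln_ge0; lra.
rewrite lnXn // ger0_norm ?mulrn_wge0 // -[ln 2 *+ _]mulr_natl.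
by apply: ler_pM => //; rewrite ?ler_nat ?ler_ln ?posrE //; lia || lra.
Qed.

Theorem proposition9 (R : realType) :
  exists c : nat -> R,
    [/\ (forall k : nat, (1 <= k)%N -> 0 < c k),
        c 1%N = 1,
        (forall p : nat, c (2 ^ p)%N = 2 ^+ (2 ^ p).-1),
        (forall k : nat,
            c (2 * k).+1 <= 3 * Num.sqrt ((2 * k).+1%:R) * c k ^+ 2)
      & (exists (C : R) (K : nat), forall k : nat, (K <= k)%N ->
            `|ln (c k)| <= C * k%:R * ln (k%:R))] /\
    forall (X : cseq R -> Prop) (m : nat) (phi : cseq R) (Rb : R),
      in_Cp m phi ->
      reproduces m phi X ->
      l2norm m phi <= Rb / Num.sqrt ((2 * m).+1%:R) ->
      forall k : nat, (2 <= k)%N ->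
        [/\ in_Cp (k * m) (cpow m phi k),
            reproduces (k * m) (cpow m phi k) X,
            l2norm (k * m) (cpow m phi k) <= dft_l1 (k * m) (cpow m phi k)
          & dft_l1 (k * m) (cpow m phi k)
              <= c k * Rb ^+ k / Num.sqrt ((2 * (k * m)).+1%:R)].
Proof.
exists (fun k => 2 ^+ k.-1); split.
  split=> [k _||p|k|]; [exact: exprn_gt0 | exact: expr0 | by [] | exact: exp2_odd_le |].
  by exists 1, 2%N => k k_ge2; rewrite mul1r ln_exp2_le.
move=> X m phi Rb phiCp phiX phi_le k k_ge2; have k_gt0 : (0 < k)%N by lia.
split; [exact: cpow_in_Cp | exact: cpow_reproduces | exact: l2norm_le_dft_l1 |].
apply: le_trans (dft_l1_cpow_le phiCp phi_le k_ge2) _.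
have k_le : (k <= 2 ^ k.-1)%N by rewrite -{1}(prednK k_gt0) ltn_expl.
rewrite -!mulrA ler_wpM2r ?divr_ge0 ?exprn_ge0 ?sqrtr_ge0 ?(l2norm_le_ge0 phi_le) //.
by rewrite -natrX ler_nat.
Qed.
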